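(* Let $a\in C^\infty(\mathbb{R})$ satisfy condition (A). The function \[ q(\xi_1,\xi_2):=\frac{\xi_1a(\xi_1)+\xi_2a(\xi_2)}{\xi_1+\xi_2},\qquad(\xi_1,\xi_2)\in\mathbb{R}^2,\ \xi_1+\xi_2\ne0, \] extends to a smooth positive function on $\mathbb{R}^2$ (namely $q(\xi_1,\xi_2)=\int_0^1(\xi a(\xi))'(-\xi_2+(\xi_1+\xi_2)t)\,dt$). Moreover, with $\xi_{\max}:=|\xi_1|\vee|\xi_2|$: (i) $q(\xi_1,\xi_2)\sim a(\xi_{\max})$, and $|\partial_1^{\gamma_1}\partial_2^{\gamma_2}q(\xi_1,\xi_2)|\lesssim\langle\xi_1\rangle^{-\gamma_1}\langle\xi_2\rangle^{-\gamma_2}a(\xi_{\max})$ for $1\le\gamma_1+\gamma_2\le3$; (ii) $|\partial_1^{\gamma_1}\partial_2^{\gamma_2}(\partial_1-\partial_2)q(\xi_1,\xi_2)|\lesssim\langle\xi_1\rangle^{-\gamma_1}\langle\xi_2\rangle^{-\gamma_2}\langle\xi_{\max}\rangle^{-1}a(\xi_{\max})$ for $0\le\gamma_1+\gamma_2\le3$, for all $(\xi_1,\xi_2)\in\mathbb{R}^2$, with implicit constants depending only on those in (A).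
   Context: Condition (A) on $a$: $a$ is positive, even, non-decreasing on $[0,\infty)$, constant on $[-1,1]$; $a(2\xi)\lesssim a(\xi)$ for all $\xi>0$; $a(N_1)/a(N_2)\gtrsim(N_1/N_2)^{1/2}$ for all dyadic $N_1>N_2\ge1$ (dyadic meaning powers of $2$); $|\partial_\xi^ja(\xi)|\lesssim\langle\xi\rangle^{-j}a(\xi)$ for all $\xi\in\mathbb{R}$, $1\le j\le5$, where $\langle\xi\rangle=(1+\xi^2)^{1/2}$. $A\sim B$ means $A\lesssim B\lesssim A$. *)

From Stdlib Require Import Reals List.
From Coquelicot Require Import Coquelicot.
Open Scope R_scope.

Definition jbr (x : R) : R := sqrt (1 + x ^ 2).

Definition smooth1 (a : R -> R) : Prop :=
  forall (n : nat) (x : R), ex_derive (Derive_n a n) x.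

(* Condition (A), with explicit constants:
   Cd for a(2xi) <~ a(xi), cdy for the dyadic lower bound,
   Cj for the symbol-type derivative bounds. *)
Definition condA (Cd cdy Cj : R) (a : R -> R) : Prop :=
  (forall x, 0 < a x) /\
  (forall x, a (- x) = a x) /\
  (forall x y, 0 <= x <= y -> a x <= a y) /\
  (forall x, -1 <= x <= 1 -> a x = a 0) /\
  (forall x, 0 < x -> a (2 * x) <= Cd * a x) /\
  (forall k1 k2 : nat, (k2 < k1)%nat ->
      cdy * sqrt (2 ^ k1 / 2 ^ k2) <= a (2 ^ k1) / a (2 ^ k2)) /\
  (forall (j : nat) (x : R), (1 <= j <= 5)%nat ->
      Rabs (Derive_n a j x) <= Cj * a x / jbr x ^ j).

(* Iterated partial derivatives of f : R -> R -> R.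
   [dpart ds f]: the head of ds is the outermost derivative;
   true = d/dxi_1, false = d/dxi_2. *)
Fixpoint dpart (ds : list bool) (f : R -> R -> R) : R -> R -> R :=
  match ds with
  | nil => f
  | true :: ds' => fun x y => Derive (fun s => dpart ds' f s y) x
  | false :: ds' => fun x y => Derive (fun t => dpart ds' f x t) y
  end.

Definition D12 (g1 g2 : nat) (f : R -> R -> R) : R -> R -> R :=
  dpart (repeat true g1 ++ repeat false g2) f.

Definition smooth2 (f : R -> R -> R) : Prop :=
  forall ds : list bool,
    (forall x y, ex_derive (fun s => dpart ds f s y) x /\
                 ex_derive (fun t => dpart ds f x t) y) /\
    (forall x y, continuous (fun p : R * R => dpart ds f (fst p) (snd p)) (x, y)).

Definition ximax (x y : R) : R := Rmax (Rabs x) (Rabs y).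

From Stdlib Require Import Reals List Lra Lia.
From Coquelicot Require Import Coquelicot.
Open Scope R_scope.

(* Proof of Lemma 4.4.  Put [F ξ = ξ a(ξ)] and let [seg x y t = -y + (x + y) t]
   be the segment from [-y] to [x].  For [k, n1, n2] set
     [Pint F k n1 n2 x y = ∫_0^1 t^n1 (t-1)^n2 F^(k+1+n1+n2)(seg x y t) dt].
   Then [q = Pint F 0 0 0] is the difference quotient [(F x - F (-y)) / (x + y)]
   off the antidiagonal, [∂1^g1 ∂2^g2 q = Pint F 0 g1 g2] (differentiation
   under the integral sign) and [(∂1 - ∂2) q = Pint F 1 0 0].  Smoothness of
   [q] follows, joint continuity coming from locally bounded partials.

   The estimates reduce to [|Pint F k n1 n2| <~ a(ξmax) / (<x>^n1 <y>^n2 <ξmax>^k)]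
   for [k <= 1], [n1 + n2 <= 3], knowing only that [F^(m)] is bounded by
   [a(ξmax) <z>^(1-m)] on the ball of radius [ξmax] (a consequence of (A)):
   - if [ξmax <= 2] or [|x + y| <= ξmax / 2], the segment stays at distance
     [~ ξmax] from the origin and the integral is bounded directly;
   - otherwise [<ξmax> <= 4 |x + y|], and one integration by parts in [t]
     gains the factor [<ξmax>]; induction on [n1 + n2] concludes.
   Finally [a <= F' <= (6 Cj + 1) a] gives [q ~ a(ξmax)]: the upper bound by
   monotonicity of [a], the lower bound because a quarter of the segment lies
   outside the ball of radius [ξmax / 2] and [a] is doubling. *)

Lemma jbr_ge1 u : 1 <= jbr u.
Proof.
  unfold jbr. rewrite <- sqrt_1 at 1. apply sqrt_le_1_alt.
  pose proof (pow2_ge_0 u). lra.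
Qed.

Lemma jbr_pos u : 0 < jbr u.
Proof. pose proof (jbr_ge1 u). lra. Qed.

Lemma jbr_opp u : jbr (- u) = jbr u.
Proof. unfold jbr. f_equal. ring. Qed.

Lemma jbr_le_sqrt u c : 0 <= c -> 1 + u ^ 2 <= c ^ 2 -> jbr u <= c.
Proof.
  intros Hc H. unfold jbr. rewrite <- (sqrt_pow2 c Hc). apply sqrt_le_1_alt; lra.
Qed.

Lemma abs_le_jbr u : Rabs u <= jbr u.
Proof.
  unfold jbr. rewrite <- (sqrt_pow2 (Rabs u)) by apply Rabs_pos.
  apply sqrt_le_1_alt. rewrite pow2_abs. lra.
Qed.

Lemma jbr_mono u v : Rabs u <= Rabs v -> jbr u <= jbr v.
Proof.
  intros H. unfold jbr. apply sqrt_le_1_alt.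
  rewrite <- (pow2_abs u), <- (pow2_abs v). pose proof (Rabs_pos u). nra.
Qed.

Lemma jbr_le_double u : 1 <= u -> jbr u <= 2 * u.
Proof. intros H. apply jbr_le_sqrt; nra. Qed.

Lemma jbr_half u M : 0 <= M -> M / 2 <= Rabs u -> jbr M <= 2 * jbr u.
Proof.
  intros HM H. apply jbr_le_sqrt. pose proof (jbr_pos u); lra.
  rewrite Rpow_mult_distr. unfold jbr. rewrite pow2_sqrt by (pose proof (pow2_ge_0 u); lra).
  rewrite <- (pow2_abs u). nra.
Qed.

Lemma jbr_le3 u : Rabs u <= 2 -> jbr u <= 3.
Proof.
  intros H. apply jbr_le_sqrt. lra. rewrite <- (pow2_abs u). pose proof (Rabs_pos u). nra.
Qed.

Ltac continuous_by_derive :=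
  apply (@ex_derive_continuous R_AbsRing R_NormedModule); auto_derive; auto.

Lemma mvt_bound (g dg : R -> R) a b B :
  (forall s, is_derive g s (dg s)) ->
  (forall s, Rmin a b <= s <= Rmax a b -> Rabs (dg s) <= B) ->
  Rabs (g b - g a) <= B * Rabs (b - a).
Proof.
  intros Hd HB.
  destruct (MVT_gen g a b dg) as [c [Hc ->]].
  - intros s _. apply Hd.
  - intros s _. apply continuity_pt_filterlim, (@ex_derive_continuous R_AbsRing R_NormedModule).
    eexists; apply Hd.
  - rewrite Rabs_mult. apply Rmult_le_compat_r. apply Rabs_pos. now apply HB.
Qed.

Lemma continuity_2d_bounded_partials (f f1 f2 : R -> R -> R) x y :
  (forall u v, is_derive (fun s => f s v) u (f1 u v)) ->
  (forall u v, is_derive (fun s => f u s) v (f2 u v)) ->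
  (forall r, exists B, 0 <= B /\ forall u v, Rabs u <= r -> Rabs v <= r ->
     Rabs (f1 u v) <= B /\ Rabs (f2 u v) <= B) ->
  continuity_2d_pt f x y.
Proof.
  intros H1 H2 Hb eps.
  destruct (Hb (Rabs x + Rabs y + 1)) as [B [HB0 HB]].
  assert (Hd : 0 < Rmin 1 (eps / (2 * B + 1))).
  { apply Rmin_pos. lra. apply Rdiv_lt_0_compat. apply cond_pos. lra. }
  exists (mkposreal _ Hd). intros u v Hu Hv. simpl in Hu, Hv.
  pose proof (Rmin_l 1 (eps / (2 * B + 1))). pose proof (Rmin_r 1 (eps / (2 * B + 1))).
  assert (Hbox : forall s a b, Rabs (a - b) < 1 -> Rmin b a <= s <= Rmax b a ->
             Rabs b <= Rabs x + Rabs y -> Rabs s <= Rabs x + Rabs y + 1).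
  { intros s a b Hab Hs Hb0. apply Rabs_le_between.
    apply Rabs_lt_between' in Hab. apply Rabs_le_between in Hb0.
    unfold Rmin, Rmax in Hs. destruct (Rle_dec b a); lra. }
  assert (Hy : Rabs y <= Rabs x + Rabs y) by (pose proof (Rabs_pos x); lra).
  assert (Hx : Rabs x <= Rabs x + Rabs y) by (pose proof (Rabs_pos y); lra).
  assert (Hvr : Rabs v <= Rabs x + Rabs y + 1).
  { apply (Hbox v v y); [lra | split; [apply Rmin_r | apply Rmax_r] | auto]. }
  assert (Ev : Rabs (f u v - f x v) <= B * Rabs (u - x)).
  { apply (mvt_bound (fun s => f s v) (fun s => f1 s v)); auto.
    intros s Hs. apply HB; auto. apply (Hbox s u x); auto; lra. }
  assert (Ey : Rabs (f x v - f x y) <= B * Rabs (v - y)).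
  { apply (mvt_bound (f x) (f2 x)); auto.
    intros s Hs. apply HB; auto. lra. apply (Hbox s v y); auto; lra. }
  replace (f u v - f x y) with ((f u v - f x v) + (f x v - f x y)) by ring.
  eapply Rle_lt_trans. apply Rabs_triang.
  assert (Hsmall : B * (2 * (eps / (2 * B + 1))) < eps).
  { destruct eps as [e He]; simpl.
    replace (B * (2 * (e / (2 * B + 1)))) with (e - e / (2 * B + 1)) by (field; lra).
    assert (0 < e / (2 * B + 1)) by (apply Rdiv_lt_0_compat; lra). lra. }
  pose proof (Rabs_pos (u - x)). pose proof (Rabs_pos (v - y)). nra.
Qed.

(** * The integral kernel *)

Definition seg (x y t : R) : R := - y + (x + y) * t.

(* The weight [t^n1 (t-1)^n2] produced by [n1] derivatives in [x] and [n2]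
   derivatives in [y] of a function of [seg x y t]. *)
Definition wt (n1 n2 : nat) (t : R) : R := t ^ n1 * (t - 1) ^ n2.

Definition Pint (F : R -> R) (k n1 n2 : nat) (x y : R) : R :=
  RInt (fun t => wt n1 n2 t * Derive_n F (k + S (n1 + n2)) (seg x y t)) 0 1.

Lemma seg_le x y t : 0 <= t <= 1 -> Rabs (seg x y t) <= ximax x y.
Proof.
  intros Ht. unfold seg, ximax.
  replace (- y + (x + y) * t) with (t * x + (1 - t) * (- y)) by ring.
  eapply Rle_trans. apply Rabs_triang. rewrite !Rabs_mult, Rabs_Ropp.
  rewrite (Rabs_pos_eq t), (Rabs_pos_eq (1 - t)) by lra.
  pose proof (Rmax_l (Rabs x) (Rabs y)). pose proof (Rmax_r (Rabs x) (Rabs y)).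
  pose proof (Rabs_pos x). pose proof (Rabs_pos y). nra.
Qed.

Lemma wt_le1 n1 n2 t : 0 <= t <= 1 -> Rabs (wt n1 n2 t) <= 1.
Proof.
  intros Ht.
  assert (Hpow : forall z n, Rabs z <= 1 -> Rabs (z ^ n) <= 1).
  { intros z n Hz. rewrite <- RPow_abs, <- (pow1 n).
    apply pow_incr. split; [apply Rabs_pos | exact Hz]. }
  unfold wt. rewrite Rabs_mult, <- (Rmult_1_l 1).
  apply Rmult_le_compat; try apply Rabs_pos; apply Hpow, Rabs_le; lra.
Qed.

Lemma cont_wt n1 n2 t : continuous (wt n1 n2) t.
Proof. unfold wt. continuous_by_derive. Qed.

Section Kernel.

Variable F : R -> R.
Hypothesis HF : smooth1 F.

Lemma cont_Dn n x : continuous (Derive_n F n) x.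
Proof. apply (@ex_derive_continuous R_AbsRing R_NormedModule), HF. Qed.

Lemma cont_kernel (w : R -> R) m x y t : (forall t, continuous w t) ->
  continuous (fun t => w t * Derive_n F m (seg x y t)) t.
Proof.
  intros Hw. apply (continuous_mult w (fun t => Derive_n F m (seg x y t))); auto.
  apply (continuous_comp (seg x y) (Derive_n F m)). unfold seg; continuous_by_derive.
  apply cont_Dn.
Qed.

Lemma ex_RInt_kernel (w : R -> R) m x y a b : (forall t, continuous w t) ->
  ex_RInt (fun t => w t * Derive_n F m (seg x y t)) a b.
Proof.
  intros Hw. apply (@ex_RInt_continuous R_CompleteNormedModule). intros t _.
  now apply cont_kernel.
Qed.

Lemma is_derive_param m (w b c : R -> R) u0 :
  (forall t, continuous w t) -> (forall t, continuous b t) -> (forall t, continuous c t) ->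
  is_derive (fun u => RInt (fun t => w t * Derive_n F m (b t + u * c t)) 0 1) u0
    (RInt (fun t => w t * (c t * Derive_n F (S m) (b t + u0 * c t))) 0 1).
Proof.
  intros Hw Hb Hc.
  assert (Hlin : forall t u, is_derive (fun z => w t * Derive_n F m (b t + z * c t)) u
                               (w t * (c t * Derive_n F (S m) (b t + u * c t)))).
  { intros t u. apply (is_derive_scal (fun z => Derive_n F m (b t + z * c t))).
    apply (is_derive_comp (Derive_n F m) (fun z => b t + z * c t)).
    - apply Derive_correct, HF.
    - auto_derive; auto; ring. }
  assert (Hcont : forall g : R -> R, (forall t, continuous g t) ->
            forall u t, continuity_2d_pt (fun (_ : R) v => g v) u t).
  { intros g Hg u t. apply continuity_1d_2d_pt_comp.
    apply continuity_pt_filterlim, Hg. apply continuity_2d_pt_id2. }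
  rewrite (RInt_ext _ (fun t => Derive (fun u => w t * Derive_n F m (b t + u * c t)) u0)).
  2:{ intros t _. symmetry. apply is_derive_unique, Hlin. }
  apply is_derive_RInt_param.
  - apply filter_forall. intros u t _. eexists. apply Hlin.
  - intros t _.
    apply continuity_2d_pt_ext with (f := fun u v => w v * (c v * Derive_n F (S m) (b v + u * c v))).
    { intros u v. symmetry. apply is_derive_unique, Hlin. }
    apply continuity_2d_pt_mult. now apply Hcont.
    apply continuity_2d_pt_mult. now apply Hcont.
    apply continuity_1d_2d_pt_comp.
    + apply continuity_pt_filterlim, cont_Dn.
    + apply continuity_2d_pt_plus. now apply Hcont.
      apply continuity_2d_pt_mult. apply continuity_2d_pt_id1. now apply Hcont.
  - apply filter_forall. intros u.
    apply (@ex_RInt_continuous R_CompleteNormedModule). intros t _.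
    apply (continuous_mult w (fun t => Derive_n F m (b t + u * c t))); auto.
    apply (continuous_comp (fun t => b t + u * c t) (Derive_n F m)). 2: apply cont_Dn.
    apply (continuous_plus b (fun t => u * c t)); auto.
    apply (continuous_mult (fun _ => u) c); auto. apply continuous_const.
Qed.

Lemma is_derive_Pint_x k n1 n2 x y :
  is_derive (fun s => Pint F k n1 n2 s y) x (Pint F k (S n1) n2 x y).
Proof.
  unfold Pint.
  replace (k + S (S n1 + n2))%nat with (S (k + S (n1 + n2))) by lia.
  apply (is_derive_ext
    (fun s => RInt (fun t => wt n1 n2 t * Derive_n F (k + S (n1 + n2)) ((- y + y * t) + s * t)) 0 1)).
  { intros s. apply RInt_ext. intros t _. unfold seg. do 2 f_equal. ring. }
  rewrite (RInt_ext _ (fun t =>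
    wt n1 n2 t * (t * Derive_n F (S (k + S (n1 + n2))) ((- y + y * t) + x * t)))).
  2:{ intros t _. replace (seg x y t) with ((- y + y * t) + x * t) by (unfold seg; ring).
      unfold wt. simpl. ring. }
  apply (is_derive_param _ (wt n1 n2) (fun t => - y + y * t) (fun t => t)).
  - apply cont_wt.
  - intros t. continuous_by_derive.
  - intros t. continuous_by_derive.
Qed.

Lemma is_derive_Pint_y k n1 n2 x y :
  is_derive (fun s => Pint F k n1 n2 x s) y (Pint F k n1 (S n2) x y).
Proof.
  unfold Pint.
  replace (k + S (n1 + S n2))%nat with (S (k + S (n1 + n2))) by lia.
  apply (is_derive_ext
    (fun s => RInt (fun t => wt n1 n2 t * Derive_n F (k + S (n1 + n2)) (x * t + s * (t - 1))) 0 1)).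
  { intros s. apply RInt_ext. intros t _. unfold seg. do 2 f_equal. ring. }
  rewrite (RInt_ext _ (fun t =>
    wt n1 n2 t * ((t - 1) * Derive_n F (S (k + S (n1 + n2))) (x * t + y * (t - 1))))).
  2:{ intros t _. replace (seg x y t) with (x * t + y * (t - 1)) by (unfold seg; ring).
      unfold wt. simpl. ring. }
  apply (is_derive_param _ (wt n1 n2) (fun t => x * t) (fun t => t - 1)).
  - apply cont_wt.
  - intros t. continuous_by_derive.
  - intros t. continuous_by_derive.
Qed.

Local Notation ntrue ds := (count_occ Bool.bool_dec ds true).
Local Notation nfalse ds := (count_occ Bool.bool_dec ds false).

Lemma dpart_Pint k ds n1 n2 x y :
  dpart ds (Pint F k n1 n2) x y = Pint F k (n1 + ntrue ds) (n2 + nfalse ds) x y.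
Proof.
  revert n1 n2 x y. induction ds as [|d ds IH]; intros n1 n2 x y.
  - simpl. now rewrite !Nat.add_0_r.
  - destruct d; simpl.
    + rewrite (Derive_ext _ _ _ (fun s => IH n1 n2 s y)).
      rewrite (is_derive_unique _ _ _ (is_derive_Pint_x k _ _ x y)). f_equal; lia.
    + rewrite (Derive_ext _ _ _ (fun s => IH n1 n2 x s)).
      rewrite (is_derive_unique _ _ _ (is_derive_Pint_y k _ _ x y)). f_equal; lia.
Qed.

Lemma dpart_ext ds (f g : R -> R -> R) : (forall x y, f x y = g x y) ->
  forall x y, dpart ds f x y = dpart ds g x y.
Proof.
  intros H. induction ds as [|d ds IH]; intros x y; simpl; auto.
  destruct d; apply Derive_ext; intros; apply IH.
Qed.

Lemma D12_Pint k g1 g2 x y : D12 g1 g2 (Pint F k 0 0) x y = Pint F k g1 g2 x y.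
Proof.
  unfold D12. rewrite dpart_Pint, !count_occ_app.
  rewrite (count_occ_repeat_eq _ _ eq_refl), (count_occ_repeat_neq _ _ Bool.diff_false_true).
  rewrite (count_occ_repeat_neq _ _ Bool.diff_true_false), (count_occ_repeat_eq _ _ eq_refl).
  f_equal; lia.
Qed.

Lemma Pint_locally_bounded k n1 n2 r : exists B, 0 <= B /\
  forall x y, Rabs x <= r -> Rabs y <= r -> Rabs (Pint F k n1 n2 x y) <= B.
Proof.
  set (m := (k + S (n1 + n2))%nat).
  destruct (Rle_dec (- r) r) as [Hr|Hr].
  2:{ exists 0. split. lra. intros x y Hx. pose proof (Rabs_pos x). lra. }
  destruct (continuity_ab_maj (fun z => Rabs (Derive_n F m z)) (- r) r Hr) as [z0 [Hz0 _]].
  { intros z _. apply continuity_pt_filterlim.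
    apply (continuous_comp (Derive_n F m) Rabs). apply cont_Dn. apply continuous_Rabs. }
  exists (Rabs (Derive_n F m z0)). split. apply Rabs_pos. intros x y Hx Hy.
  unfold Pint. fold m.
  replace (Rabs (Derive_n F m z0)) with ((1 - 0) * Rabs (Derive_n F m z0)) by ring.
  apply abs_RInt_le_const. lra. apply ex_RInt_kernel, cont_wt.
  intros t Ht. rewrite Rabs_mult, <- (Rmult_1_l (Rabs (Derive_n F m z0))).
  apply Rmult_le_compat; try apply Rabs_pos. now apply wt_le1.
  apply Hz0. apply Rabs_le_between. eapply Rle_trans. now apply seg_le.
  unfold ximax. now apply Rmax_lub.
Qed.

Lemma smooth2_Pint k : smooth2 (Pint F k 0 0).
Proof.
  intros ds. split.
  - intros x y. split.
    + eapply ex_derive_ext. { intros s. symmetry. apply dpart_Pint. }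
      eexists. apply is_derive_Pint_x.
    + eapply ex_derive_ext. { intros s. symmetry. apply dpart_Pint. }
      eexists. apply is_derive_Pint_y.
  - intros x y.
    set (n1 := (0 + ntrue ds)%nat). set (n2 := (0 + nfalse ds)%nat).
    assert (Hc : continuity_2d_pt (Pint F k n1 n2) x y).
    { apply (continuity_2d_bounded_partials _ (Pint F k (S n1) n2) (Pint F k n1 (S n2))).
      - intros. apply is_derive_Pint_x.
      - intros. apply is_derive_Pint_y.
      - intros r.
        destruct (Pint_locally_bounded k (S n1) n2 r) as [B1 [HB1 H1]].
        destruct (Pint_locally_bounded k n1 (S n2) r) as [B2 [HB2 H2]].
        exists (Rmax B1 B2). split. eapply Rle_trans. apply HB1. apply Rmax_l.
        intros u v Hu Hv. split.
        + eapply Rle_trans. apply H1; auto. apply Rmax_l.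
        + eapply Rle_trans. apply H2; auto. apply Rmax_r. }
    apply continuity_2d_pt_filterlim in Hc.
    apply (continuous_ext (fun p : R * R => Pint F k n1 n2 (fst p) (snd p))); auto.
    intros p. symmetry. apply dpart_Pint.
Qed.

(* Derivative of the weight, written with [pred] so that both cases [n_i = 0]
   and [n_i > 0] are covered by one formula. *)
Lemma is_derive_wt n1 n2 t :
  is_derive (wt n1 n2) t (INR n1 * wt (pred n1) n2 t + INR n2 * wt n1 (pred n2) t).
Proof.
  unfold wt. auto_derive; auto.
  replace (t + - (1)) with (t - 1) by ring.
  destruct n1, n2; cbn [pred]; ring.
Qed.

(* The two terms of the derivative of the weight, each paired with the
   derivative order matching its own [Pint]; the index shift is harmless since
   the coefficient [INR 0] kills the mismatched case. *)
Lemma wt_pred_kernel (H : nat -> R) k n1 n2 t :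
  (INR n1 * wt (pred n1) n2 t + INR n2 * wt n1 (pred n2) t) * H (k + (n1 + n2))%nat =
  INR n1 * (wt (pred n1) n2 t * H (k + S (pred n1 + n2))%nat)
  + INR n2 * (wt n1 (pred n2) t * H (k + S (n1 + pred n2))%nat).
Proof.
  destruct n1 as [|m1], n2 as [|m2]; cbn [pred].
  - simpl INR. ring.
  - replace (k + S (0 + m2))%nat with (k + (0 + S m2))%nat by lia. simpl INR. ring.
  - replace (k + S (m1 + 0))%nat with (k + (S m1 + 0))%nat by lia. simpl INR. ring.
  - replace (k + S (m1 + S m2))%nat with (k + (S m1 + S m2))%nat by lia.
    replace (k + S (S m1 + m2))%nat with (k + (S m1 + S m2))%nat by lia. ring.
Qed.

(* Integration by parts in [t]: multiplying by [x + y] (the speed of [seg])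
   trades one derivative of [F] for boundary values and lower weights. *)
Lemma Pint_ibp k n1 n2 x y :
  (x + y) * Pint F k n1 n2 x y =
  wt n1 n2 1 * Derive_n F (k + (n1 + n2)) x - wt n1 n2 0 * Derive_n F (k + (n1 + n2)) (- y)
  - (INR n1 * Pint F k (pred n1) n2 x y + INR n2 * Pint F k n1 (pred n2) x y).
Proof.
  set (G := Derive_n F (k + (n1 + n2))).
  set (Pn := fun m1 m2 => fun t => wt m1 m2 t * Derive_n F (k + S (m1 + m2)) (seg x y t)).
  set (dphi := fun t => INR n1 * Pn (pred n1) n2 t + INR n2 * Pn n1 (pred n2) t
                        + (x + y) * Pn n1 n2 t).
  assert (Hd : forall t, is_derive (fun t => wt n1 n2 t * G (seg x y t)) t (dphi t)).
  { intros t.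
    replace (dphi t) with ((INR n1 * wt (pred n1) n2 t + INR n2 * wt n1 (pred n2) t) * G (seg x y t)
                           + wt n1 n2 t * ((x + y) * Derive_n F (S (k + (n1 + n2))) (seg x y t))).
    - apply (is_derive_mult (wt n1 n2) (fun t => G (seg x y t))).
      + apply is_derive_wt.
      + apply (is_derive_comp G (seg x y)). apply Derive_correct, HF.
        unfold seg. auto_derive; auto; ring.
      + intros; apply Rmult_comm.
    - unfold dphi, Pn, G. rewrite (wt_pred_kernel (fun m => Derive_n F m (seg x y t))).
      replace (k + S (n1 + n2))%nat with (S (k + (n1 + n2))) by lia. ring. }
  assert (Hex : forall m1 m2, ex_RInt (Pn m1 m2) 0 1) by (intros; apply ex_RInt_kernel, cont_wt).
  assert (Hftc : is_RInt dphi 0 1 (wt n1 n2 1 * G x - wt n1 n2 0 * G (- y))).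
  { replace (wt n1 n2 1 * G x) with (wt n1 n2 1 * G (seg x y 1)) by (unfold seg; do 2 f_equal; ring).
    replace (wt n1 n2 0 * G (- y)) with (wt n1 n2 0 * G (seg x y 0)) by (unfold seg; do 2 f_equal; ring).
    apply (is_RInt_derive (fun t => wt n1 n2 t * G (seg x y t))). intros; apply Hd.
    intros t _. unfold dphi.
    assert (Hc : forall m1 m2, continuous (Pn m1 m2) t) by (intros; apply cont_kernel, cont_wt).
    apply (continuous_plus (fun t => INR n1 * Pn (pred n1) n2 t + INR n2 * Pn n1 (pred n2) t)).
    apply (continuous_plus (fun t => INR n1 * Pn (pred n1) n2 t)).
    all: apply (continuous_scal_r _ (Pn _ _)); apply Hc. }
  assert (Hsum : is_RInt dphi 0 1 (INR n1 * Pint F k (pred n1) n2 x y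
                    + INR n2 * Pint F k n1 (pred n2) x y + (x + y) * Pint F k n1 n2 x y)).
  { apply (@is_RInt_plus R_CompleteNormedModule). apply (@is_RInt_plus R_CompleteNormedModule).
    all: apply (@is_RInt_scal R_CompleteNormedModule); apply (RInt_correct (Pn _ _)), Hex. }
  pose proof (is_RInt_unique _ _ _ _ Hftc) as E1. rewrite (is_RInt_unique _ _ _ _ Hsum) in E1.
  fold G. lra.
Qed.

Lemma Pint_difference_quotient x y : x + y <> 0 ->
  Pint F 0 0 0 x y = (F x - F (- y)) / (x + y).
Proof.
  intros Hs. apply Rmult_eq_reg_l with (x + y); auto.
  rewrite Pint_ibp. unfold wt. simpl. field. auto.
Qed.

(* [(∂1 - ∂2)] replaces the weight [t - (t - 1) = 1] and raises the order of [F]. *)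
Lemma Pint_diff x y : Pint F 0 1 0 x y - Pint F 0 0 1 x y = Pint F 1 0 0 x y.
Proof.
  unfold Pint. rewrite <- (@RInt_minus R_CompleteNormedModule).
  - apply RInt_ext. intros t _. unfold wt, minus, plus, opp. simpl. ring.
  - apply ex_RInt_kernel, cont_wt.
  - apply ex_RInt_kernel, cont_wt.
Qed.

End Kernel.

(** * Size of the kernel integrals *)

Definition weight (k n1 n2 : nat) (x y : R) : R :=
  jbr x ^ n1 * jbr y ^ n2 * jbr (ximax x y) ^ k.

Lemma weight_pos k n1 n2 x y : 0 < weight k n1 n2 x y.
Proof. unfold weight. repeat apply Rmult_lt_0_compat; apply pow_lt, jbr_pos. Qed.

Lemma weight_le k n1 n2 x y c :
  jbr x <= c -> jbr y <= c -> jbr (ximax x y) <= c -> weight k n1 n2 x y <= c ^ (k + (n1 + n2)).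
Proof.
  intros Hx Hy HM. unfold weight. rewrite !pow_add.
  pose proof (jbr_pos x). pose proof (jbr_pos y). pose proof (jbr_pos (ximax x y)).
  replace (c ^ k * (c ^ n1 * c ^ n2)) with (c ^ n1 * c ^ n2 * c ^ k) by ring.
  repeat apply Rmult_le_compat; try apply Rmult_le_pos; try apply pow_le; try lra;
    apply pow_incr; lra.
Qed.

Lemma seg_ge x y t : 0 <= t <= 1 -> ximax x y - Rabs (x + y) <= Rabs (seg x y t).
Proof.
  intros Ht. unfold seg, ximax, Rmax. pose proof (Rabs_pos (x + y)).
  destruct (Rle_dec (Rabs x) (Rabs y)).
  - pose proof (Rabs_triang_inv (- y) (- (t * (x + y)))) as Hi.
    replace (- y - - (t * (x + y))) with (- y + (x + y) * t) in Hi by ring.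
    rewrite Rabs_Ropp, Rabs_Ropp, Rabs_mult, (Rabs_pos_eq t) in Hi by lra. nra.
  - pose proof (Rabs_triang_inv x ((1 - t) * (x + y))) as Hi.
    replace (x - (1 - t) * (x + y)) with (- y + (x + y) * t) in Hi by ring.
    rewrite Rabs_mult, (Rabs_pos_eq (1 - t)) in Hi by lra. nra.
Qed.

Lemma seg_far x y : exists s, 0 <= s <= 3 / 4 /\
  forall t, s <= t <= s + 1 / 4 -> ximax x y / 2 <= Rabs (seg x y t).
Proof.
  assert (Hs : Rabs (x + y) <= 2 * ximax x y).
  { unfold ximax. pose proof (Rmax_l (Rabs x) (Rabs y)). pose proof (Rmax_r (Rabs x) (Rabs y)).
    pose proof (Rabs_triang x y). lra. }
  pose proof (Rabs_pos (x + y)).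
  destruct (Rle_dec (Rabs y) (Rabs x)) as [Hxy|Hxy].
  - exists (3 / 4). split. lra. intros t Ht.
    assert (HM : ximax x y = Rabs x) by (unfold ximax; rewrite Rmax_left; lra).
    pose proof (Rabs_triang_inv x ((1 - t) * (x + y))) as Hi.
    replace (x - (1 - t) * (x + y)) with (seg x y t) in Hi by (unfold seg; ring).
    rewrite Rabs_mult, (Rabs_pos_eq (1 - t)) in Hi by lra. nra.
  - exists 0. split. lra. intros t Ht.
    assert (HM : ximax x y = Rabs y) by (unfold ximax; rewrite Rmax_right; lra).
    pose proof (Rabs_triang_inv (- y) (- t * (x + y))) as Hi.
    replace (- y - - t * (x + y)) with (seg x y t) in Hi by (unfold seg; ring).
    rewrite Rabs_Ropp, Rabs_mult, Rabs_Ropp, (Rabs_pos_eq t) in Hi by lra. nra.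
Qed.

Lemma bracket_ratio (X J : R) k n : 1 <= X <= J -> (k <= 1)%nat ->
  X / X ^ (k + n) * (X ^ n * J ^ k) <= J.
Proof.
  intros HX Hk. assert (0 < X ^ n) by (apply pow_lt; lra).
  destruct k as [|[|]]; try lia; simpl.
  - replace (X / X ^ n * (X ^ n * 1)) with X by (field; lra). lra.
  - replace (X / (X * X ^ n) * (X ^ n * (J * 1))) with J by (field; lra). lra.
Qed.

Section Size.

Variables (F : R -> R) (K A x y : R).
Hypotheses (HF : smooth1 F) (HK : 0 <= K) (HA : 0 <= A).

Let M := ximax x y.
Let J := jbr M.

(* Symbol bounds for [F] on the ball of radius [ξmax], with [A] in place of [a(ξmax)]. *)
Hypothesis F_size : forall m z, (m <= 5)%nat -> Rabs z <= M ->
  Rabs (Derive_n F m z) <= K * A * jbr z / jbr z ^ m.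

Lemma x_le_M : Rabs x <= M.
Proof. apply Rmax_l. Qed.

Lemma y_le_M : Rabs y <= M.
Proof. apply Rmax_r. Qed.

Lemma M_nonneg : 0 <= M.
Proof. eapply Rle_trans. apply Rabs_pos. apply x_le_M. Qed.

Lemma F_size_seg m t : (m <= 4)%nat -> 0 <= t <= 1 ->
  Rabs (Derive_n F (S m) (seg x y t)) <= K * A / jbr (seg x y t) ^ m.
Proof.
  intros Hm Ht. pose proof (jbr_pos (seg x y t)).
  replace (K * A / jbr (seg x y t) ^ m) with (K * A * jbr (seg x y t) / jbr (seg x y t) ^ S m)
    by (simpl; field; split; [apply pow_nonzero|]; lra).
  apply F_size. lia. now apply seg_le.
Qed.

Lemma bracket_le_J z : Rabs z <= M -> 1 <= jbr z <= J.
Proof.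
  intros Hz. split. apply jbr_ge1.
  apply jbr_mono. rewrite (Rabs_pos_eq M); auto using M_nonneg.
Qed.

(* Where the segment stays comparable to [ξmax] (or everything is bounded),
   each bracket in the weight is at most [3 <seg t>]. *)
Lemma weight_le_seg k n1 n2 t : (M <= 2 \/ Rabs (x + y) <= M / 2) ->
  (k + (n1 + n2) <= 4)%nat -> 0 <= t <= 1 ->
  weight k n1 n2 x y <= 81 * jbr (seg x y t) ^ (k + (n1 + n2)).
Proof.
  intros Hcase Hkn Ht. pose proof (jbr_ge1 (seg x y t)) as HW.
  set (W := jbr (seg x y t)) in *.
  assert (HJ : J <= 3 * W).
  { unfold J. destruct Hcase as [H2|H2].
    - pose proof (jbr_le3 M ltac:(rewrite Rabs_pos_eq; [lra | apply M_nonneg])). lra.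
    - pose proof (seg_ge x y t Ht). apply Rle_trans with (2 * W). 2: lra.
      apply jbr_half. apply M_nonneg. unfold M in H2 |- *. lra. }
  apply Rle_trans with ((3 * W) ^ (k + (n1 + n2))).
  - pose proof (bracket_le_J x x_le_M). pose proof (bracket_le_J y y_le_M).
    apply weight_le; [lra | lra | exact HJ].
  - rewrite Rpow_mult_distr. apply Rmult_le_compat_r. apply pow_le; lra.
    apply Rle_trans with (3 ^ 4). apply Rle_pow; [lra | lia]. lra.
Qed.

Lemma Pint_size_direct k n1 n2 : (M <= 2 \/ Rabs (x + y) <= M / 2) ->
  (k + (n1 + n2) <= 4)%nat ->
  Rabs (Pint F k n1 n2 x y) * weight k n1 n2 x y <= 81 * K * A.
Proof.
  intros Hcase Hkn. set (e := (k + (n1 + n2))%nat).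
  pose proof (weight_pos k n1 n2 x y) as Hw.
  apply Rmult_le_reg_r with (/ weight k n1 n2 x y). apply Rinv_0_lt_compat, Hw.
  rewrite Rmult_assoc, Rinv_r, Rmult_1_r by lra.
  replace (81 * K * A * / weight k n1 n2 x y) with ((1 - 0) * (81 * K * A / weight k n1 n2 x y))
    by (unfold Rdiv; ring).
  apply abs_RInt_le_const. lra. apply ex_RInt_kernel, cont_wt. auto.
  intros t Ht. pose proof (weight_le_seg k n1 n2 t Hcase Hkn Ht) as Hw3. fold e in Hw3.
  pose proof (jbr_ge1 (seg x y t)) as HW. set (W := jbr (seg x y t)) in *.
  rewrite Rabs_mult. replace (k + S (n1 + n2))%nat with (S e) by lia.
  pose proof (F_size_seg e t Hkn Ht) as HD. fold W in HD.
  assert (HWe : 0 < W ^ e) by (apply pow_lt; lra).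
  apply Rle_trans with (1 * (K * A / W ^ e)).
  { apply Rmult_le_compat; auto using Rabs_pos, wt_le1. }
  rewrite Rmult_1_l. unfold Rdiv.
  replace (81 * K * A * / weight k n1 n2 x y) with (K * A * / (weight k n1 n2 x y / 81))
    by (field; lra).
  apply Rmult_le_compat_l. nra.
  apply Rinv_le_contravar. apply Rdiv_lt_0_compat; lra. lra.
Qed.

Lemma ibp_boundary_x k n1 n2 : (k <= 1)%nat -> (k + (n1 + n2) <= 5)%nat ->
  Rabs (wt n1 n2 1 * Derive_n F (k + (n1 + n2)) x) * weight k n1 n2 x y <= K * A * J.
Proof.
  intros Hk Hkn. pose proof (bracket_le_J x x_le_M) as HX.
  assert (HKAJ : 0 <= K * A * J) by (repeat apply Rmult_le_pos; lra).
  pose proof (weight_pos k n1 n2 x y) as Hw.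
  destruct n2 as [|n2].
  2:{ replace (wt n1 (S n2) 1) with 0 by (unfold wt; simpl; ring).
      rewrite Rmult_0_l, Rabs_R0, Rmult_0_l. exact HKAJ. }
  rewrite Rabs_mult, Nat.add_0_r.
  apply Rle_trans with (1 * (K * A * jbr x / jbr x ^ (k + n1)) * weight k n1 0 x y).
  { apply Rmult_le_compat_r. lra. apply Rmult_le_compat; auto using Rabs_pos.
    - apply wt_le1; lra.
    - apply F_size. lia. apply x_le_M. }
  unfold weight. rewrite pow_O. fold M J.
  replace (1 * (K * A * jbr x / jbr x ^ (k + n1)) * (jbr x ^ n1 * 1 * J ^ k))
    with (K * A * (jbr x / jbr x ^ (k + n1) * (jbr x ^ n1 * J ^ k))) by (unfold Rdiv; ring).
  apply Rmult_le_compat_l. nra. now apply bracket_ratio.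
Qed.

Lemma ibp_boundary_y k n1 n2 : (k <= 1)%nat -> (k + (n1 + n2) <= 5)%nat ->
  Rabs (wt n1 n2 0 * Derive_n F (k + (n1 + n2)) (- y)) * weight k n1 n2 x y <= K * A * J.
Proof.
  intros Hk Hkn. pose proof (bracket_le_J y y_le_M) as HY.
  assert (HKAJ : 0 <= K * A * J) by (repeat apply Rmult_le_pos; lra).
  pose proof (weight_pos k n1 n2 x y) as Hw.
  destruct n1 as [|n1].
  2:{ replace (wt (S n1) n2 0) with 0 by (unfold wt; simpl; ring).
      rewrite Rmult_0_l, Rabs_R0, Rmult_0_l. exact HKAJ. }
  rewrite Rabs_mult, Nat.add_0_l.
  apply Rle_trans with (1 * (K * A * jbr y / jbr y ^ (k + n2)) * weight k 0 n2 x y).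
  { apply Rmult_le_compat_r. lra. apply Rmult_le_compat; auto using Rabs_pos.
    - apply wt_le1; lra.
    - rewrite <- (jbr_opp y). apply F_size. lia. rewrite Rabs_Ropp. apply y_le_M. }
  unfold weight. rewrite pow_O. fold M J.
  replace (1 * (K * A * jbr y / jbr y ^ (k + n2)) * (1 * jbr y ^ n2 * J ^ k))
    with (K * A * (jbr y / jbr y ^ (k + n2) * (jbr y ^ n2 * J ^ k))) by (unfold Rdiv; ring).
  apply Rmult_le_compat_l. nra. now apply bracket_ratio.
Qed.

(* Lower-order terms of the integration by parts, given a bound [B] for them:
   the missing bracket [<x>] (resp. [<y>]) is at most [J]. *)
Lemma ibp_interior_x k n1 n2 B :
  ((0 < n1)%nat -> Rabs (Pint F k (pred n1) n2 x y) * weight k (pred n1) n2 x y <= B) ->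
  INR n1 * Rabs (Pint F k (pred n1) n2 x y) * weight k n1 n2 x y <= INR n1 * B * J.
Proof.
  intros HB. destruct n1 as [|n1]. { simpl. lra. }
  pose proof (bracket_le_J x x_le_M) as HX. pose proof (pos_INR (S n1)).
  pose proof (Rabs_pos (Pint F k n1 n2 x y)). pose proof (weight_pos k n1 n2 x y).
  specialize (HB ltac:(lia)). simpl pred in HB |- *.
  replace (weight k (S n1) n2 x y) with (jbr x * weight k n1 n2 x y) by (unfold weight; simpl; ring).
  apply Rle_trans with (INR (S n1) * (J * (Rabs (Pint F k n1 n2 x y) * weight k n1 n2 x y))).
  - replace (INR (S n1) * Rabs (Pint F k n1 n2 x y) * (jbr x * weight k n1 n2 x y))
      with (INR (S n1) * (jbr x * (Rabs (Pint F k n1 n2 x y) * weight k n1 n2 x y))) by ring.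
    apply Rmult_le_compat_l. lra. apply Rmult_le_compat_r. nra. lra.
  - assert (0 <= INR (S n1) * J) by (apply Rmult_le_pos; lra). nra.
Qed.

Lemma ibp_interior_y k n1 n2 B :
  ((0 < n2)%nat -> Rabs (Pint F k n1 (pred n2) x y) * weight k n1 (pred n2) x y <= B) ->
  INR n2 * Rabs (Pint F k n1 (pred n2) x y) * weight k n1 n2 x y <= INR n2 * B * J.
Proof.
  intros HB. destruct n2 as [|n2]. { simpl. lra. }
  pose proof (bracket_le_J y y_le_M) as HY. pose proof (pos_INR (S n2)).
  pose proof (Rabs_pos (Pint F k n1 n2 x y)). pose proof (weight_pos k n1 n2 x y).
  specialize (HB ltac:(lia)). simpl pred in HB |- *.
  replace (weight k n1 (S n2) x y) with (jbr y * weight k n1 n2 x y) by (unfold weight; simpl; ring).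
  apply Rle_trans with (INR (S n2) * (J * (Rabs (Pint F k n1 n2 x y) * weight k n1 n2 x y))).
  - replace (INR (S n2) * Rabs (Pint F k n1 n2 x y) * (jbr y * weight k n1 n2 x y))
      with (INR (S n2) * (jbr y * (Rabs (Pint F k n1 n2 x y) * weight k n1 n2 x y))) by ring.
    apply Rmult_le_compat_l. lra. apply Rmult_le_compat_r. nra. lra.
  - assert (0 <= INR (S n2) * J) by (apply Rmult_le_pos; lra). nra.
Qed.

Lemma Pint_ibp_weighted k n1 n2 B : (k <= 1)%nat -> (k + (n1 + n2) <= 5)%nat ->
  ((0 < n1)%nat -> Rabs (Pint F k (pred n1) n2 x y) * weight k (pred n1) n2 x y <= B) ->
  ((0 < n2)%nat -> Rabs (Pint F k n1 (pred n2) x y) * weight k n1 (pred n2) x y <= B) ->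
  Rabs (x + y) * Rabs (Pint F k n1 n2 x y) * weight k n1 n2 x y
    <= J * (2 * K * A + INR (n1 + n2) * B).
Proof.
  intros Hk Hkn H1 H2. rewrite <- Rabs_mult, Pint_ibp by auto.
  pose proof (ibp_boundary_x k n1 n2 Hk Hkn) as Hb1.
  pose proof (ibp_boundary_y k n1 n2 Hk Hkn) as Hb0.
  pose proof (ibp_interior_x k n1 n2 B H1) as Hi1.
  pose proof (ibp_interior_y k n1 n2 B H2) as Hi2.
  pose proof (pos_INR n1). pose proof (pos_INR n2). rewrite plus_INR.
  set (b1 := wt n1 n2 1 * Derive_n F (k + (n1 + n2)) x) in *.
  set (b0 := wt n1 n2 0 * Derive_n F (k + (n1 + n2)) (- y)) in *.
  set (p1 := Pint F k (pred n1) n2 x y) in *. set (p2 := Pint F k n1 (pred n2) x y) in *.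
  assert (Htri : Rabs (b1 - b0 - (INR n1 * p1 + INR n2 * p2))
                 <= Rabs b1 + Rabs b0 + INR n1 * Rabs p1 + INR n2 * Rabs p2).
  { unfold Rminus. eapply Rle_trans. apply Rabs_triang. rewrite Rabs_Ropp.
    eapply Rle_trans. apply Rplus_le_compat_r. apply Rabs_triang. rewrite Rabs_Ropp.
    eapply Rle_trans. apply Rplus_le_compat_l. apply Rabs_triang.
    rewrite !Rabs_mult, !(Rabs_pos_eq (INR _)) by auto. lra. }
  apply Rle_trans
    with ((Rabs b1 + Rabs b0 + INR n1 * Rabs p1 + INR n2 * Rabs p2) * weight k n1 n2 x y).
  - apply Rmult_le_compat_r. left; apply weight_pos. exact Htri.
  - rewrite !Rmult_plus_distr_r. nra.
Qed.

(* Near the antidiagonal [J <= 4 |x + y|], so one integration by parts bounds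
   the weighted size of [Pint] by the boundary terms and any bound [B] for the
   two lower-order integrals. *)
Lemma Pint_ibp_step k n1 n2 B : 2 <= M -> M / 2 <= Rabs (x + y) ->
  (k <= 1)%nat -> (k + (n1 + n2) <= 5)%nat -> 0 <= B ->
  ((0 < n1)%nat -> Rabs (Pint F k (pred n1) n2 x y) * weight k (pred n1) n2 x y <= B) ->
  ((0 < n2)%nat -> Rabs (Pint F k n1 (pred n2) x y) * weight k n1 (pred n2) x y <= B) ->
  Rabs (Pint F k n1 n2 x y) * weight k n1 n2 x y <= 4 * (2 * K * A + INR (n1 + n2) * B).
Proof.
  intros HM Hs Hk Hkn HB H1 H2.
  pose proof (Pint_ibp_weighted k n1 n2 B Hk Hkn H1 H2) as Hibp.
  assert (HJ : J <= 4 * Rabs (x + y)) by (pose proof (jbr_le_double M ltac:(lra)); unfold J; lra).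
  assert (HJ0 : 0 < J) by apply jbr_pos.
  set (w := weight k n1 n2 x y) in *. pose proof (weight_pos k n1 n2 x y) as Hw. fold w in Hw.
  set (P0 := Rabs (Pint F k n1 n2 x y)) in *. assert (HP0 : 0 <= P0) by apply Rabs_pos.
  apply Rmult_le_reg_l with J. exact HJ0.
  assert (HC : 0 <= 2 * K * A + INR (n1 + n2) * B)
    by (pose proof (pos_INR (n1 + n2)); pose proof (Rmult_le_pos K A HK HA); nra).
  assert (J * (P0 * w) <= 4 * Rabs (x + y) * P0 * w)
    by (pose proof (Rmult_le_pos P0 w HP0 (Rlt_le _ _ Hw)); nra).
  nra.
Qed.

Lemma Pint_size_ibp n : 2 <= M -> M / 2 <= Rabs (x + y) -> forall k n1 n2,
  (k <= 1)%nat -> (n1 + n2 = n)%nat -> (k + n <= 4)%nat ->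
  Rabs (Pint F k n1 n2 x y) * weight k n1 n2 x y <= 8 * 17 ^ n * K * A.
Proof.
  intros HM Hs. assert (HKA : 0 <= K * A) by (apply Rmult_le_pos; auto).
  induction n as [|n IH]; intros k n1 n2 Hk Hn Hkn.
  - eapply Rle_trans. apply (Pint_ibp_step k n1 n2 0); auto; try lia; lra.
    rewrite Hn. simpl. lra.
  - eapply Rle_trans.
    { apply (Pint_ibp_step k n1 n2 (8 * 17 ^ n * K * A)); auto; try lia.
      - pose proof (pow_le 17 n ltac:(lra)). nra.
      - intros. apply IH; lia.
      - intros. apply IH; lia. }
    rewrite Hn. pose proof (pow_R1_Rle 17 n ltac:(lra)).
    assert (INR (S n) <= 4) by (replace 4 with (INR 4) by (simpl; lra); apply le_INR; lia).
    pose proof (pos_INR (S n)). simpl pow.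
    assert (0 <= 17 ^ n * (K * A)) by (apply Rmult_le_pos; lra). nra.
Qed.

Lemma Pint_size k n1 n2 : (k <= 1)%nat -> (n1 + n2 <= 3)%nat ->
  Rabs (Pint F k n1 n2 x y) * weight k n1 n2 x y <= 8 * 17 ^ 3 * K * A.
Proof.
  intros Hk Hn. assert (HKA : 0 <= K * A) by (apply Rmult_le_pos; auto).
  destruct (Rle_dec M 2) as [H2|H2]; [|destruct (Rle_dec (Rabs (x + y)) (M / 2)) as [Hs|Hs]].
  1,2: eapply Rle_trans; [apply Pint_size_direct; auto; lia | simpl; lra].
  eapply Rle_trans. apply (Pint_size_ibp (n1 + n2)); auto; lra || lia.
  assert (17 ^ (n1 + n2) <= 17 ^ 3) by (apply Rle_pow; [lra | lia]). nra.
Qed.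

End Size.

(** * The function [F ξ = ξ a(ξ)] and condition (A) *)

Lemma Derive_n_xa (a : R -> R) : smooth1 a -> forall k z,
  Derive_n (fun x => x * a x) (S k) z = INR (S k) * Derive_n a k z + z * Derive_n a (S k) z.
Proof.
  intros Ha k. induction k as [|k IH]; intros z.
  - change (Derive (fun x => x * a x) z = INR 1 * a z + z * Derive a z).
    apply is_derive_unique.
    replace (INR 1 * a z + z * Derive a z) with (plus (mult 1 (a z)) (mult z (Derive a z)))
      by (unfold plus, mult; simpl; ring).
    apply (is_derive_mult (fun x => x) a z 1 (Derive a z)).
    + apply (is_derive_id z).
    + apply Derive_correct, (Ha O z).
    + intros; apply Rmult_comm.
  - change (Derive_n (fun x => x * a x) (S (S k)) z) with
      (Derive (Derive_n (fun x => x * a x) (S k)) z).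
    rewrite (Derive_ext _ _ _ IH). apply is_derive_unique.
    replace (INR (S (S k)) * Derive_n a (S k) z + z * Derive_n a (S (S k)) z)
      with (plus (INR (S k) * Derive_n a (S k) z)
                 (plus (mult one (Derive_n a (S k) z)) (mult z (Derive_n a (S (S k)) z))))
      by (rewrite (S_INR (S k)); change (@one R_Ring) with 1; unfold plus, mult; simpl; ring).
    apply (is_derive_plus (fun z => INR (S k) * Derive_n a k z) (fun z => z * Derive_n a (S k) z)).
    + apply (is_derive_scal (Derive_n a k)), Derive_correct, Ha.
    + apply (is_derive_mult (fun x => x) (Derive_n a (S k))).
      * apply (is_derive_id z).
      * apply Derive_correct, Ha.
      * intros; apply Rmult_comm.
Qed.

Lemma smooth1_xa (a : R -> R) : smooth1 a -> smooth1 (fun x => x * a x).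
Proof.
  intros Ha [|k] z.
  - eexists. apply (is_derive_mult (fun x => x) a z 1 (Derive a z)).
    + apply (is_derive_id z).
    + apply Derive_correct, (Ha O z).
    + intros; apply Rmult_comm.
  - apply (ex_derive_ext (fun z => INR (S k) * Derive_n a k z + z * Derive_n a (S k) z)).
    { intros; symmetry; now apply Derive_n_xa. }
    apply (ex_derive_plus (fun z => INR (S k) * Derive_n a k z) (fun z => z * Derive_n a (S k) z)).
    + apply (ex_derive_scal (Derive_n a k)), Ha.
    + apply (ex_derive_mult (fun x => x) (Derive_n a (S k))). apply ex_derive_id. apply Ha.
Qed.

Lemma is_derive_nonneg_right (f : R -> R) z l d : 0 < d ->
  (forall h, 0 < h < d -> f z <= f (z + h)) -> is_derive f z l -> 0 <= l.
Proof.
  intros Hd Hincr Hl. apply is_derive_Reals in Hl.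
  destruct (Rle_dec 0 l) as [|Hneg]; auto. exfalso.
  destruct (Hl (- l) ltac:(lra)) as [e He].
  set (h := Rmin e d / 2).
  assert (Hh : 0 < h < Rmin e d).
  { pose proof (Rmin_pos e d (cond_pos e) Hd). unfold h. lra. }
  pose proof (Rmin_l e d). pose proof (Rmin_r e d).
  specialize (He h ltac:(lra) ltac:(rewrite Rabs_pos_eq; lra)).
  assert (0 <= (f (z + h) - f z) / h).
  { apply Rdiv_le_0_compat. pose proof (Hincr h ltac:(lra)). lra. lra. }
  apply Rabs_def2 in He. lra.
Qed.

Definition C44 (Cd Cj : R) : R := 4 * (Cd + 1) * (8 * 17 ^ 3 * (6 * Cj + 1)).

Section ConditionA.

Variables (Cd cdy Cj : R) (a : R -> R).
Hypotheses (Ha : smooth1 a) (HA : condA Cd cdy Cj a) (HCj : 0 < Cj).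

Local Notation q := (Pint (fun x => x * a x) 0 0 0).

Lemma a_pos z : 0 < a z.
Proof. apply HA. Qed.

(* The doubling constant is positive (compare [a(2)] with [a(1)]). *)
Lemma Cd_pos : 0 < Cd.
Proof.
  destruct HA as [_ [_ [_ [_ [H2 _]]]]]. pose proof (H2 1 Rlt_0_1).
  pose proof (a_pos 1). pose proof (a_pos (2 * 1)). nra.
Qed.

Lemma a_doubling M : 0 <= M -> a M <= (Cd + 1) * a (M / 2).
Proof.
  intros HM0. destruct HA as [_ [_ [_ [_ [H2 _]]]]].
  pose proof (a_pos (M / 2)). pose proof Cd_pos.
  destruct (Req_dec M 0) as [E|E].
  - rewrite E. replace (0 / 2) with 0 by field. pose proof (a_pos 0). nra.
  - pose proof (H2 (M / 2) ltac:(lra)) as Hd. replace (2 * (M / 2)) with M in Hd by field. nra.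
Qed.

(* An even function nondecreasing on [[0, ∞)] is nondecreasing in [|ξ|]. *)
Lemma a_mono u v : Rabs u <= Rabs v -> a u <= a v.
Proof.
  destruct HA as [_ [Hev [Hmon _]]]. intros H.
  assert (Habs : forall w, a w = a (Rabs w)).
  { intros w. unfold Rabs. destruct (Rcase_abs w); auto. }
  rewrite (Habs u), (Habs v). apply Hmon. split; auto. apply Rabs_pos.
Qed.

(* [a] grows away from the origin, so [ξ a'(ξ) >= 0]. *)
Lemma xi_Da_nonneg z : 0 <= z * Derive a z.
Proof.
  assert (HD := Derive_correct a z (Ha O z)).
  destruct (Rtotal_order z 0) as [Hz|[Hz|Hz]].
  - assert (0 <= - Derive a z); [|nra].
    apply (is_derive_nonneg_right (fun s => - a s) z _ (- z)). lra.
    + intros h Hh. apply Ropp_le_contravar, a_mono. rewrite !Rabs_left; lra.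
    + now apply (is_derive_opp a).
  - subst. lra.
  - assert (0 <= Derive a z); [|nra].
    apply (is_derive_nonneg_right a z _ 1). lra.
    + intros h Hh. apply a_mono. rewrite !Rabs_pos_eq; lra.
    + exact HD.
Qed.

(* The symbol-type bounds of (A) for [F ξ = ξ a(ξ)], with one extra factor
   [<ξ>] (the derivatives of [F] of order [m] behave like [<ξ>^(1-m) a(ξ)]). *)
Lemma xa_derivative_bound m z : (m <= 5)%nat ->
  Rabs (Derive_n (fun x => x * a x) m z) <= (6 * Cj + 1) * a z * jbr z / jbr z ^ m.
Proof.
  intros Hm. destruct HA as [_ [_ [_ [_ [_ [_ Hd]]]]]].
  pose proof (jbr_pos z) as HJ. pose proof (a_pos z) as Hp.
  destruct m as [|m].
  - simpl Derive_n. rewrite Rabs_mult, (Rabs_pos_eq (a z)) by lra.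
    simpl pow. rewrite Rdiv_1_r.
    assert (H1 : Rabs z * a z <= jbr z * a z) by (apply Rmult_le_compat_r; [lra | apply abs_le_jbr]).
    assert (H2 : 0 <= 6 * Cj * a z * jbr z) by (repeat apply Rmult_le_pos; lra). nra.
  - rewrite Derive_n_xa by auto.
    assert (HJm : 0 < jbr z ^ m) by (apply pow_lt; auto).
    replace ((6 * Cj + 1) * a z * jbr z / jbr z ^ S m) with ((6 * Cj + 1) * a z / jbr z ^ m)
      by (simpl; field; lra).
    assert (T2 : Rabs (z * Derive_n a (S m) z) <= Cj * a z / jbr z ^ m).
    { rewrite Rabs_mult. pose proof (Hd (S m) z ltac:(lia)) as H.
      replace (Cj * a z / jbr z ^ m) with (jbr z * (Cj * a z / jbr z ^ S m)) by (simpl; field; lra).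
      apply Rmult_le_compat; auto using Rabs_pos, abs_le_jbr. }
    assert (T1 : Rabs (INR (S m) * Derive_n a m z) <= (5 * Cj + 1) * a z / jbr z ^ m).
    { rewrite Rabs_mult, Rabs_pos_eq by apply pos_INR.
      destruct m as [|m'].
      - simpl. rewrite Rabs_pos_eq by lra. unfold Rdiv. rewrite Rinv_1. nra.
      - pose proof (Hd (S m') z ltac:(lia)) as H.
        assert (HI : INR (S (S m')) <= 5) by (replace 5 with (INR 5) by (simpl; lra); apply le_INR; lia).
        apply Rle_trans with (5 * (Cj * a z / jbr z ^ S m')).
        + apply Rmult_le_compat; auto using pos_INR, Rabs_pos.
        + unfold Rdiv. assert (0 < / jbr z ^ S m') by (apply Rinv_0_lt_compat; auto). nra. }
    eapply Rle_trans. apply Rabs_triang.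
    replace ((6 * Cj + 1) * a z / jbr z ^ m) with ((5 * Cj + 1) * a z / jbr z ^ m + Cj * a z / jbr z ^ m)
      by (field; lra). lra.
Qed.

Lemma xa_first_derivative z :
  a z <= Derive_n (fun x => x * a x) 1 z <= (6 * Cj + 1) * a z.
Proof.
  split.
  - rewrite Derive_n_xa by auto. change (a z <= INR 1 * a z + z * Derive a z).
    pose proof (xi_Da_nonneg z). simpl INR. lra.
  - pose proof (xa_derivative_bound 1 z ltac:(lia)) as H.
    apply Rabs_le_between in H. pose proof (jbr_pos z).
    replace ((6 * Cj + 1) * a z * jbr z / jbr z ^ 1) with ((6 * Cj + 1) * a z) in H
      by (simpl; field; lra). lra.
Qed.

(* [F = ξ a(ξ)] satisfies the hypothesis of the section [Size] with
   [K = 6 Cj + 1] and [A = a(ξmax)]. *)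
Lemma xa_size M m z : (m <= 5)%nat -> Rabs z <= M ->
  Rabs (Derive_n (fun x => x * a x) m z) <= (6 * Cj + 1) * a M * jbr z / jbr z ^ m.
Proof.
  intros Hm Hz. eapply Rle_trans. now apply xa_derivative_bound.
  pose proof (jbr_pos z). unfold Rdiv. apply Rmult_le_compat_r.
  left; apply Rinv_0_lt_compat, pow_lt; lra.
  apply Rmult_le_compat_r. lra. apply Rmult_le_compat_l. lra.
  apply a_mono. pose proof (Rabs_pos z). rewrite (Rabs_pos_eq M); lra.
Qed.

(* [q ≲ a(ξmax)]: the integrand [F'(seg t)] is at most [K a(seg t) <= K a(ξmax)]. *)
Lemma q_upper x y : q x y <= (6 * Cj + 1) * a (ximax x y).
Proof.
  unfold Pint. apply Rle_trans with (RInt (fun _ => (6 * Cj + 1) * a (ximax x y)) 0 1).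
  2:{ rewrite RInt_const. unfold scal; simpl; unfold mult; simpl. lra. }
  apply RInt_le. lra. apply ex_RInt_kernel, cont_wt. apply smooth1_xa, Ha. apply ex_RInt_const.
  intros t Ht. change (Derive_n (fun x => x * a x) (0 + S (0 + 0)) (seg x y t)) with
    (Derive_n (fun x => x * a x) 1 (seg x y t)).
  unfold wt. rewrite !pow_O, !Rmult_1_l.
  pose proof (xa_first_derivative (seg x y t)).
  assert (a (seg x y t) <= a (ximax x y)).
  { apply a_mono. rewrite (Rabs_pos_eq (ximax x y)). apply seg_le; lra.
    eapply Rle_trans. apply Rabs_pos. apply Rmax_l. }
  nra.
Qed.

(* [q ≳ a(ξmax)]: on a quarter of the segment, [F'(seg t) >= a(ξmax / 2)], and
   the doubling bound gives [a(ξmax) <= (Cd + 1) a(ξmax / 2)]. *)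
Lemma q_lower x y : a (ximax x y) <= 4 * (Cd + 1) * q x y.
Proof.
  set (M := ximax x y).
  set (g := fun t => wt 0 0 t * Derive_n (fun x => x * a x) (0 + S (0 + 0)) (seg x y t)).
  assert (HM0 : 0 <= M) by (eapply Rle_trans; [apply Rabs_pos | apply Rmax_l]).
  pose proof Cd_pos as HCd. pose proof (a_doubling M HM0) as Hdoubling.
  assert (Hg : forall t, a (seg x y t) <= g t).
  { intros t. unfold g, wt. rewrite !pow_O, !Rmult_1_l.
    apply (xa_first_derivative (seg x y t)). }
  assert (Hex : forall u v, ex_RInt g u v)
    by (intros; apply ex_RInt_kernel, cont_wt; apply smooth1_xa, Ha).
  assert (Hnn : forall u v, u <= v -> 0 <= RInt g u v).
  { intros u v Huv. apply RInt_ge_0; auto.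
    intros t _. pose proof (Hg t). pose proof (a_pos (seg x y t)). lra. }
  destruct (seg_far x y) as [s [Hs Hfar]]. fold M in Hfar.
  assert (Hmid : a (M / 2) / 4 <= RInt g s (s + 1 / 4)).
  { replace (a (M / 2) / 4) with (RInt (fun _ => a (M / 2)) s (s + 1 / 4))
      by (rewrite RInt_const; unfold scal; simpl; unfold mult; simpl; field).
    apply RInt_le. lra. apply ex_RInt_const. auto.
    intros t Ht. eapply Rle_trans. 2: apply Hg.
    apply a_mono. rewrite Rabs_pos_eq by lra. apply Hfar. lra. }
  assert (Hsplit : q x y = RInt g 0 s + RInt g s (s + 1 / 4) + RInt g (s + 1 / 4) 1).
  { unfold Pint. fold g.
    rewrite <- (RInt_Chasles g 0 s 1), <- (RInt_Chasles g s (s + 1 / 4) 1) by auto.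
    unfold plus; simpl. ring. }
  rewrite Hsplit. pose proof (Hnn 0 s ltac:(lra)). pose proof (Hnn (s + 1 / 4) 1 ltac:(lra)). nra.
Qed.

Lemma xa_Pint_size k n1 n2 x y : (k <= 1)%nat -> (n1 + n2 <= 3)%nat ->
  Rabs (Pint (fun x => x * a x) k n1 n2 x y)
    <= 8 * 17 ^ 3 * (6 * Cj + 1) * a (ximax x y) / weight k n1 n2 x y.
Proof.
  intros Hk Hn. pose proof (weight_pos k n1 n2 x y) as Hw.
  apply Rmult_le_reg_r with (weight k n1 n2 x y). exact Hw.
  unfold Rdiv. rewrite Rmult_assoc, Rinv_l, Rmult_1_r by lra.
  apply Pint_size; auto.
  - apply smooth1_xa, Ha.
  - lra.
  - left; apply a_pos.
  - intros m z Hm Hz. now apply xa_size.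
Qed.

Lemma C44_factors : 4 * (Cd + 1) <= C44 Cd Cj /\ 8 * 17 ^ 3 * (6 * Cj + 1) <= C44 Cd Cj.
Proof.
  pose proof Cd_pos. unfold C44.
  assert (1 <= 8 * 17 ^ 3 * (6 * Cj + 1)) by (simpl; lra). split; nra.
Qed.

Lemma le_C44 b z : 0 <= b <= 8 * 17 ^ 3 * (6 * Cj + 1) -> b * a z <= C44 Cd Cj * a z.
Proof.
  intros Hb. pose proof (a_pos z). pose proof C44_factors. apply Rmult_le_compat_r; lra.
Qed.

Lemma q_difference_quotient x y : x + y <> 0 -> q x y = (x * a x + y * a y) / (x + y).
Proof.
  intros Hs. rewrite Pint_difference_quotient by (auto; apply smooth1_xa, Ha).
  destruct HA as [_ [Hev _]]. rewrite Hev. f_equal. ring.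
Qed.

Lemma q_pos x y : 0 < q x y.
Proof.
  pose proof (q_lower x y). pose proof (a_pos (ximax x y)). pose proof Cd_pos. nra.
Qed.

Lemma q_comparable x y : a (ximax x y) <= C44 Cd Cj * q x y /\ q x y <= C44 Cd Cj * a (ximax x y).
Proof.
  pose proof (q_pos x y). pose proof C44_factors. split.
  - eapply Rle_trans. apply q_lower. apply Rmult_le_compat_r; lra.
  - eapply Rle_trans. apply q_upper. apply le_C44. simpl. lra.
Qed.

(* Part (i): derivatives of [q] are the integrals [Pint F 0 g1 g2]. *)
Lemma q_derivatives g1 g2 x y : (g1 + g2 <= 3)%nat ->
  Rabs (D12 g1 g2 q x y) <= C44 Cd Cj * a (ximax x y) / (jbr x ^ g1 * jbr y ^ g2).
Proof.
  intros Hg. rewrite D12_Pint by apply smooth1_xa, Ha.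
  eapply Rle_trans. apply xa_Pint_size; lia.
  unfold weight. rewrite pow_O, Rmult_1_r. unfold Rdiv. apply Rmult_le_compat_r.
  - left; apply Rinv_0_lt_compat, Rmult_lt_0_compat; apply pow_lt, jbr_pos.
  - apply le_C44. simpl. lra.
Qed.

(* Part (ii): derivatives of [(∂1 - ∂2) q = Pint F 1 0 0] gain [<ξmax>^-1]. *)
Lemma q_diff_derivatives g1 g2 x y : (g1 + g2 <= 3)%nat ->
  Rabs (D12 g1 g2 (fun s t => D12 1 0 q s t - D12 0 1 q s t) x y)
    <= C44 Cd Cj * a (ximax x y) / (jbr x ^ g1 * jbr y ^ g2 * jbr (ximax x y)).
Proof.
  intros Hg. assert (HF := smooth1_xa a Ha). unfold D12 at 1.
  rewrite (dpart_ext _ _ (Pint (fun x => x * a x) 1 0 0)).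
  2:{ intros s t. rewrite !D12_Pint by exact HF. now apply Pint_diff. }
  fold (D12 g1 g2 (Pint (fun x => x * a x) 1 0 0) x y). rewrite D12_Pint by exact HF.
  eapply Rle_trans. apply xa_Pint_size; lia.
  unfold weight. rewrite pow_1. unfold Rdiv. apply Rmult_le_compat_r.
  - left; apply Rinv_0_lt_compat; repeat apply Rmult_lt_0_compat; try apply pow_lt; apply jbr_pos.
  - apply le_C44. simpl. lra.
Qed.

End ConditionA.

Theorem lemma4p4 :
  forall Cd cdy Cj : R, 0 < Cd -> 0 < cdy -> 0 < Cj ->
  exists C : R, 0 < C /\
  forall a : R -> R, smooth1 a -> condA Cd cdy Cj a ->
  exists q : R -> R -> R,
    smooth2 q /\
    (forall x y, x + y <> 0 -> q x y = (x * a x + y * a y) / (x + y)) /\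
    (forall x y, 0 < q x y) /\
    (* (i) *)
    (forall x y, a (ximax x y) <= C * q x y /\ q x y <= C * a (ximax x y)) /\
    (forall (g1 g2 : nat) x y, (1 <= g1 + g2 <= 3)%nat ->
       Rabs (D12 g1 g2 q x y) <= C * a (ximax x y) / (jbr x ^ g1 * jbr y ^ g2)) /\
    (* (ii) *)
    (forall (g1 g2 : nat) x y, (g1 + g2 <= 3)%nat ->
       Rabs (D12 g1 g2 (fun s t => D12 1 0 q s t - D12 0 1 q s t) x y)
         <= C * a (ximax x y) / (jbr x ^ g1 * jbr y ^ g2 * jbr (ximax x y))).
Proof.
  intros Cd cdy Cj HCd _ HCj.
  exists (C44 Cd Cj). split.
  { unfold C44. assert (0 < 8 * 17 ^ 3 * (6 * Cj + 1)) by (simpl; lra). nra. }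
  intros a Ha HA. exists (Pint (fun x => x * a x) 0 0 0).
  split; [|split; [|split; [|split; [|split]]]].
  - apply smooth2_Pint, smooth1_xa, Ha.
  - apply (q_difference_quotient Cd cdy Cj a Ha HA).
  - apply (q_pos Cd cdy Cj a Ha HA HCj).
  - apply (q_comparable Cd cdy Cj a Ha HA HCj).
  - intros g1 g2 x y Hg. apply (q_derivatives Cd cdy Cj a Ha HA HCj). lia.
  - apply (q_diff_derivatives Cd cdy Cj a Ha HA HCj).
Qed.
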